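(* Let $t>0$, let $X,Y\subset\mathbb{R}^D$ be finite sets and $Q=X\cap Y$. Then $X$ and $Y$ are magnitude-equivalent at scale $t$ if and only if $\mathbf{w}^t_X(z)=\mathbf{w}^t_Y(z)$ for all $z\in Q$, $\mathbf{w}^t_X(z)=0$ for all $z\in X\setminus Q$, and $\mathbf{w}^t_Y(z)=0$ for all $z\in Y\setminus Q$.
   Context: For a finite set $A\subset\mathbb{R}^D$ and $t>0$, the matrix $\zeta_{tA}(x,y)=\exp(-t\|x-y\|)$ ($x,y\in A$) is invertible and $\mathbf{w}^t_A=\zeta_{tA}^{-1}\mathbb{1}$ is the weighting vector of $A$ at scale $t$ (the unique vector with $\sum_{y\in A}\zeta_{tA}(x,y)\mathbf{w}^t_A(y)=1$ for all $x\in A$). Finite $X,Y\subset\mathbb{R}^D$ are magnitude-equivalent at scale $t$ if $\{x\in X:\mathbf{w}^t_X(x)\neq0\}=\{y\in Y:\mathbf{w}^t_Y(y)\neq0\}$. *)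

From HB Require Import structures.
From mathcomp Require Import all_boot all_order all_algebra.
From mathcomp Require Import finmap.
From mathcomp Require Import reals.
From mathcomp Require Import sequences exp.
Set Implicit Arguments. Unset Strict Implicit. Unset Printing Implicit Defensive.
Import Order.TTheory GRing.Theory Num.Theory.
Local Open Scope ring_scope.
Local Open Scope fset_scope.

Section Magnitude.
Variables (R : realType) (D : nat).

Definition pt := 'rV[R]_D.

Definition edist (x y : pt) : R :=
  Num.sqrt (\sum_(i < D) (x ord0 i - y ord0 i) ^+ 2).

Definition ptA (A : {fset pt}) (i : nat) : pt := nth 0 (enum_fset A) i.

Definition zeta (t : R) (A : {fset pt}) : 'M[R]_(size (enum_fset A)) :=
  \matrix_(i, j) expR (- (t * edist (ptA A i) (ptA A j))).

Definition weightvec (t : R) (A : {fset pt}) : 'cV[R]_(size (enum_fset A)) :=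
  invmx (zeta t A) *m const_mx 1.

(* w^t_A(x) for x in A (value 0 outside A, never used there) *)
Definition weight (t : R) (A : {fset pt}) (x : pt) : R :=
  \sum_(i < size (enum_fset A) | ptA A i == x) weightvec t A i ord0.

Definition wsupport (t : R) (A : {fset pt}) : {fset pt} :=
  [fset x in A | weight t A x != 0].

Definition magnitude_equivalent (t : R) (X Y : {fset pt}) : Prop :=
  wsupport t X = wsupport t Y.

End Magnitude.

(* Everything rests on the exponential kernel exp (-t |x - y|) being strictly
   positive definite on distinct points of R^D.  It is positive semidefinite as
   a limit of entrywise exponentials of positive semidefinite matrices (Schur
   product theorem), the distance |x - y| being recovered from Gaussians
   through the power series of 1 - sqrt (1 - g).  A vanishing quadratic form
   then forces sum_i c_i exp (-t |y - p_i|) = 0 for every y, which the kink of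
   exp (-t |s|) at s = 0 rules out unless every c_i vanishes.  Consequently
   the equations sum_(y in S) exp (-t |x - y|) w y = 1 (x in S) have at most
   one solution on a finite set S.  If X and Y have the same support S, the
   weightings of X and Y both solve them on S, so they agree there, and they
   vanish off S by definition of the support. *)

From Pilot Require Import Defs.
From HB Require Import structures.
From mathcomp Require Import all_boot all_order all_algebra.
From mathcomp Require Import finmap.
From mathcomp Require Import boolp classical_sets functions reals topology normedtype.
From mathcomp Require Import sequences exp derive realfun.
From mathcomp Require Import ring lra.
Set Implicit Arguments. Unset Strict Implicit. Unset Printing Implicit Defensive.
Import Order.TTheory GRing.Theory Num.Theory.
Import numFieldNormedType.Exports.
Local Open Scope ring_scope.

(** * Positive semidefinite matrices *)

Section QuadraticForms.
Variables (R : realFieldType) (I : finType).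
Implicit Types (M : I -> I -> R) (c : I -> R).

Definition qform M c := \sum_i \sum_j c i * c j * M i j.
Definition psd M := forall c, 0 <= qform M c.
Definition sym M := forall i j, M i j = M j i.

Lemma eq_qform M1 M2 c : (forall i j, M1 i j = M2 i j) -> qform M1 c = qform M2 c.
Proof. by move=> eM; apply: eq_bigr => i _; apply: eq_bigr => j _; rewrite eM. Qed.

Lemma eq_psd M1 M2 : (forall i j, M1 i j = M2 i j) -> psd M1 -> psd M2.
Proof. by move=> eM hM c; rewrite -(eq_qform c eM). Qed.

Lemma qformD M1 M2 c : qform (fun i j => M1 i j + M2 i j) c = qform M1 c + qform M2 c.
Proof.
rewrite /qform -big_split; apply: eq_bigr => i _.
by rewrite -big_split; apply: eq_bigr => j _; rewrite mulrDr.
Qed.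

Lemma qformZ a M c : qform (fun i j => a * M i j) c = a * qform M c.
Proof.
rewrite /qform mulr_sumr; apply: eq_bigr => i _.
by rewrite mulr_sumr; apply: eq_bigr => j _; rewrite mulrCA.
Qed.

Lemma qform_rescale d M c :
  qform (fun i j => d i * d j * M i j) c = qform M (fun i => c i * d i).
Proof. by rewrite /qform; do 2![apply: eq_bigr => ? _]; ring. Qed.

Lemma qform1 c : qform (fun _ _ => 1) c = (\sum_i c i) ^+ 2.
Proof.
rewrite /qform expr2 mulr_suml; apply: eq_bigr => i _.
by rewrite mulr_sumr; apply: eq_bigr => j _; rewrite mulr1.
Qed.

Lemma qform_rank1 (v : I -> R) c :
  qform (fun i j => v i * v j) c = (\sum_i c i * v i) ^+ 2.
Proof. by rewrite -qform1 -qform_rescale /qform; do 2![apply: eq_bigr => ? _]; rewrite mulr1. Qed.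

Lemma psd0 : psd (fun _ _ => 0).
Proof. by move=> c; rewrite /qform big1 // => i _; rewrite big1 // => j _; rewrite mulr0. Qed.

Lemma psd1 : psd (fun _ _ => 1).
Proof. by move=> c; rewrite qform1 sqr_ge0. Qed.

Lemma psdD M1 M2 : psd M1 -> psd M2 -> psd (fun i j => M1 i j + M2 i j).
Proof. by move=> h1 h2 c; rewrite qformD addr_ge0. Qed.

Lemma psdZ a M : 0 <= a -> psd M -> psd (fun i j => a * M i j).
Proof. by move=> a0 hM c; rewrite qformZ mulr_ge0. Qed.

Lemma psd_rescale d M : psd M -> psd (fun i j => d i * d j * M i j).
Proof. by move=> hM c; rewrite qform_rescale. Qed.

Lemma psd_sum (J : finType) (Ms : J -> I -> I -> R) :
  (forall k, psd (Ms k)) -> psd (fun i j => \sum_k Ms k i j).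
Proof.
move=> hM c; have -> : qform (fun i j => \sum_k Ms k i j) c = \sum_k qform (Ms k) c.
  rewrite /qform [RHS]exchange_big; apply: eq_bigr => i _ /=.
  by rewrite [RHS]exchange_big; apply: eq_bigr => j _; rewrite mulr_sumr.
by apply: sumr_ge0 => k _; apply: hM.
Qed.

Lemma psd_gram (J : finType) (v : I -> J -> R) :
  psd (fun i j => \sum_k v i k * v j k).
Proof. by apply: psd_sum => k c; rewrite qform_rank1 sqr_ge0. Qed.

Definition bform M c d := \sum_i \sum_j c i * d j * M i j.

Lemma qform_addE M c d : qform M (fun i => c i + d i) =
  qform M c + bform M c d + bform M d c + qform M d.
Proof.
rewrite /qform /bform -!big_split; apply: eq_bigr => i _.
by rewrite -!big_split; apply: eq_bigr => j _ /=; ring.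
Qed.

Lemma sum_delta k (F : I -> R) : \sum_i (i == k)%:R * F i = F k.
Proof.
by rewrite (bigD1 k) //= eqxx mul1r big1 ?addr0 // => i /negbTE ->; rewrite mul0r.
Qed.

Lemma bform_deltar M c k x :
  bform M c (fun j => x * (j == k)%:R) = x * \sum_i c i * M i k.
Proof.
rewrite /bform mulr_sumr; apply: eq_bigr => i _.
rewrite -(sum_delta k (fun j => x * (c i * M i j))).
by apply: eq_bigr => j _; ring.
Qed.

Lemma bform_deltal M c k x :
  bform M (fun i => x * (i == k)%:R) c = x * \sum_j c j * M k j.
Proof.
rewrite /bform -(sum_delta k (fun i => x * \sum_j c j * M i j)).
by apply: eq_bigr => i _; rewrite !mulr_sumr; apply: eq_bigr => j _; ring.
Qed.

Lemma qform_delta M k x : qform M (fun i => x * (i == k)%:R) = x ^+ 2 * M k k.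
Proof.
rewrite -[LHS]/(bform M _ (fun j => x * (j == k)%:R)) bform_deltal.
rewrite (eq_bigr (fun j => (j == k)%:R * (x * M k j))) ?sum_delta; first by ring.
by move=> j _; ring.
Qed.

Lemma qform_add_delta M c k x : sym M ->
  qform M (fun i => c i + x * (i == k)%:R) =
  qform M c + 2 * x * (\sum_i c i * M i k) + x ^+ 2 * M k k.
Proof.
move=> sM; rewrite qform_addE bform_deltar bform_deltal qform_delta.
under [X in _ + x * X]eq_bigr do rewrite sM.
ring.
Qed.

Lemma psd_diag_ge0 M k : psd M -> 0 <= M k k.
Proof. by move=> /(_ (fun i => 1 * (i == k)%:R)); rewrite qform_delta expr1n mul1r. Qed.

Lemma psd_qform_eq0 M c j : sym M -> psd M -> qform M c = 0 ->
  \sum_i c i * M i j = 0.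
Proof.
move=> sM hM qc0; have Mjj := psd_diag_ge0 j hM.
have := hM (fun i => c i + (- (\sum_i c i * M i j) / (M j j + 1)) * (i == j)%:R).
rewrite qform_add_delta // qc0 add0r; move: (\sum_i _) => s.
have -> : 2 * (- s / (M j j + 1)) * s + (- s / (M j j + 1)) ^+ 2 * M j j =
    - (s ^+ 2 * (M j j + 2) / (M j j + 1) ^+ 2).
  by field; rewrite gt_eqF //; lra.
have pos : 0 < (M j j + 2) / (M j j + 1) ^+ 2 by rewrite divr_gt0 ?exprn_gt0; lra.
rewrite -mulrA oppr_ge0 pmulr_lle0 // => s2_le0.
by apply/eqP; rewrite -sqrf_eq0 eq_le s2_le0 sqr_ge0.
Qed.

Lemma psd_diag_eq0 M k j : sym M -> psd M -> M k k = 0 -> M j k = 0.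
Proof.
move=> sM hM Mkk; rewrite sM -(sum_delta k (fun i => M i j)).
apply: psd_qform_eq0 => //; have := qform_delta M k 1; rewrite expr1n mul1r Mkk => <-.
by apply: eq_bigr => i _; apply: eq_bigr => l _; rewrite !mul1r.
Qed.

Lemma psd_schur_complement M k : sym M -> psd M -> 0 < M k k ->
  psd (fun i j => M i j - M i k * M j k / M k k).
Proof.
move=> sM hM Mk0.
apply: (eq_psd (M1 := fun i j => M i j + - (M k k)^-1 * (M i k * M j k))) => [i j|c].
  by ring.
have := hM (fun i => c i + (- (\sum_i c i * M i k) / M k k) * (i == k)%:R).
rewrite qform_add_delta // qformD qformZ qform_rank1; move: (\sum_i _) => s.
suff -> : qform M c + 2 * (- s / M k k) * s + (- s / M k k) ^+ 2 * M k k =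
  qform M c + - (M k k)^-1 * s ^+ 2 by [].
by field; rewrite gt_eqF.
Qed.

(* Induction on the number of nonzero diagonal entries of B, writing
   B = B' + b b^T / B k k with B' the Schur complement at k. *)
Lemma psdM A B : sym B -> psd A -> psd B -> psd (fun i j => A i j * B i j).
Proof.
move=> sB hA hB; move: {2}#|[set i | B i i != 0]| (leqnn #|[set i | B i i != 0]|) => n.
elim: n B sB hB => [|n IHn] B sB hB.
  rewrite leqn0 => /eqP/card0_eq diag0.
  have Bjj j : B j j = 0 by apply/eqP/negbFE; have := diag0 j; rewrite inE.
  by apply: eq_psd psd0 => i j; rewrite (psd_diag_eq0 _ sB hB (Bjj j)) mulr0.
move=> le_n; have [k /= Bk|diag0] := pickP [pred k | B k k != 0]; last first.
  by apply: IHn => //; rewrite eq_card0 // => i; rewrite inE; apply: diag0.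
have Bk0 : 0 < B k k by rewrite lt_neqAle eq_sym Bk psd_diag_ge0.
pose B' i j := B i j - B i k * B j k / B k k.
have sB' : sym B' by move=> i j; rewrite /B' sB [B i k * _]mulrC.
have le_n' : (#|[set i | B' i i != 0%R]| <= n)%N.
  have sub : [set i | B' i i != 0] \subset [set i | B i i != 0] :\ k.
    apply/fintype.subsetP => i; rewrite !inE /B'; apply: contraNT; rewrite negb_and negbK.
    case/orP => [/eqP ->|/negPn/eqP Bii]; first by rewrite mulrK ?subrr // unitfE.
    by rewrite Bii sB (psd_diag_eq0 k sB hB Bii) mulr0 mul0r subrr.
  rewrite -ltnS (leq_trans _ le_n) // (cardsD1 k [set i | B i i != 0]) inE Bk add1n ltnS.
  exact: subset_leq_card.
have Bk0' : 0 <= (B k k)^-1 by rewrite invr_ge0 ltW.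
have := psdD (IHn B' sB' (psd_schur_complement sB hB Bk0) le_n')
  (psdZ Bk0' (psd_rescale (B ^~ k) hA)).
by apply: eq_psd => i j; rewrite /B'; field; rewrite gt_eqF.
Qed.
End QuadraticForms.

Arguments psd0 {R I}.
Arguments psd1 {R I}.

Local Open Scope classical_set_scope.
Local Open Scope ring_scope.

Section PsdLimits.
Variables (R : realType) (I : finType).
Implicit Types (M : I -> I -> R).

Lemma psd_lim (Ms : nat -> I -> I -> R) M : (forall n, psd (Ms n)) ->
  (forall i j, (fun n => Ms n i j) @ \oo --> M i j) -> psd M.
Proof.
move=> hM cvM c.
have cvq : (fun n => qform (Ms n) c) @ \oo --> qform M c.
  apply: cvg_big => [|i _]; first exact: add_continuous.
  apply: cvg_big => [|j _]; first exact: add_continuous.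
  by apply: cvgMr; apply: cvM.
rewrite -(cvg_lim _ cvq) //; apply: limr_ge; first by apply/cvg_ex; exists (qform M c).
by near=> n; apply: hM.
Unshelve. all: by end_near.
Qed.

Lemma psdX M k : sym M -> psd M -> psd (fun i j => M i j ^+ k).
Proof.
move=> sM hM; elim: k => [|k IHk].
  by apply: (eq_psd _ psd1) => i j; rewrite expr0.
by apply: (eq_psd _ (psdM sM IHk hM)) => i j; rewrite exprSr.
Qed.

Lemma psd_expR M : sym M -> psd M -> psd (fun i j => expR (M i j)).
Proof.
move=> sM hM; apply: (psd_lim (Ms := fun n i j => series (exp_coeff (M i j)) n)).
  move=> n; apply: (eq_psd (M1 := fun i j => \sum_(k < n) k`!%:R^-1 * M i j ^+ k)).
    by move=> i j; rewrite /series /= big_mkord; apply: eq_bigr => k _; rewrite mulrC.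
  by apply: psd_sum => k; apply: psdZ (psdX k sM hM); rewrite invr_ge0.
by move=> i j; apply: cvg_toP => //; apply: is_cvg_series_exp_coeff.
Qed.

End PsdLimits.

(** * The Laplace kernel is positive semidefinite *)

Section SqrtIteration.
Variable R : realType.

(* The iterates are polynomials in g with nonnegative coefficients and increase
   to the least fixed point 1 - sqrt (1 - g) of x |-> (g + x ^ 2) / 2. *)
Fixpoint sqrt_iter (g : R) k := if k is k'.+1 then (g + sqrt_iter g k' ^+ 2) / 2 else 0.

Lemma sqrt_iter_cvg (g : R) : 0 <= g <= 1 -> sqrt_iter g @ \oo --> 1 - Num.sqrt (1 - g).
Proof.
case/andP => g0 g1; set L := 1 - Num.sqrt (1 - g).
have sqrt_sq : Num.sqrt (1 - g) ^+ 2 = 1 - g by rewrite sqr_sqrtr // subr_ge0.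
have L0 : 0 <= L by rewrite subr_ge0 -[leRHS]sqrtr1 ler_sqrt; lra.
have L1 : L <= 1 by rewrite lerBlDr lerDl sqrtr_ge0.
have fixL : (g + L ^+ 2) / 2 = L.
  rewrite /L; move: (Num.sqrt _) sqrt_sq => s s2.
  by rewrite sqrrB expr1n s2; field.
have iter_step (x y : R) : 0 <= x <= y -> (g + x ^+ 2) / 2 <= (g + y ^+ 2) / 2.
  case/andP=> x0 xy; rewrite ler_pM2r ?invr_gt0 ?ltr0n // lerD2l.
  by rewrite ler_pXn2r ?nnegrE // (le_trans x0).
have iter_bnd k : 0 <= sqrt_iter g k <= L.
  elim: k => [|k IHk] /=; first by rewrite lexx L0.
  rewrite -[X in _ <= _ <= X]fixL iter_step // andbT divr_ge0 // addr_ge0 ?sqr_ge0 //.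
have iter_mono : nondecreasing_seq (sqrt_iter g).
  apply/nondecreasing_seqP; elim=> [|k IHk] /=; first by rewrite expr0n addr0 divr_ge0.
  by apply: iter_step; case/andP: (iter_bnd k) => -> _.
have /(nondecreasing_cvgn iter_mono) : has_ubound (range (sqrt_iter g)).
  by exists L => _ [k _ <-]; case/andP: (iter_bnd k).
set l := sup _ => cvl.
suff -> : L = l by [].
have l0L : 0 <= l <= L.
  rewrite -(cvg_lim _ cvl) //; apply/andP; split.
    by apply: limr_ge; [exact: cvgP cvl | near=> k; case/andP: (iter_bnd k)].
  by apply: limr_le; [exact: cvgP cvl | near=> k; case/andP: (iter_bnd k)].
have fixl : (g + l ^+ 2) / 2 = l.
  have cv_step : (fun k => (g + sqrt_iter g k ^+ 2) / 2) @ \oo --> (g + l ^+ 2) / 2.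
    apply: cvgMr_tmp; apply: cvgD; first exact: cvg_cst.
    by rewrite expr2; under eq_fun do rewrite expr2; apply: cvgM.
  have cv_shift : (fun k => sqrt_iter g k.+1) @ \oo --> l by rewrite cvg_shiftS.
  by rewrite -(cvg_lim _ cv_step) // -(cvg_lim _ cv_shift).
have : Num.sqrt ((1 - l) ^+ 2) = 1 - l by rewrite sqrtr_sqr ger0_norm //; lra.
rewrite (_ : (1 - l) ^+ 2 = 1 - g); last by rewrite sqrrB expr1n mul1r; lra.
rewrite /L => ->; ring.
Unshelve. all: by end_near.
Qed.

Lemma psd_one_sub_sqrt (I : finType) (G : I -> I -> R) : sym G -> psd G ->
  (forall i j, 0 <= G i j <= 1) -> psd (fun i j => 1 - Num.sqrt (1 - G i j)).
Proof.
move=> sG hG G01; apply: (psd_lim (Ms := fun n i j => sqrt_iter (G i j) n)); last first.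
  by move=> i j; apply: sqrt_iter_cvg.
elim=> [|n IHn] /=; first exact: psd0.
have sF : sym (fun i j => sqrt_iter (G i j) n) by move=> i j; rewrite sG.
have half_ge0 : 0 <= 2^-1 :> R by rewrite invr_ge0 ler0n.
by apply: (eq_psd _ (psdZ half_ge0 (psdD hG (psdM sF IHn IHn)))) => i j; rewrite mulrC expr2.
Qed.

End SqrtIteration.

Section ExpBounds.
Variable R : realType.

Lemma expRN_bounds (x : R) : 0 <= x -> x - x ^+ 2 <= 1 - expR (- x) <= x.
Proof.
move=> x0; apply/andP; split; last by have := expR_ge1Dx (- x); lra.
have inv_bound : expR (- x) <= (1 + x)^-1.
  by rewrite expRN lef_pV2 ?posrE ?expR_gt0 ?expR_ge1Dx //; lra.
suff : (1 + x)^-1 <= 1 - x + x ^+ 2 by lra.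
rewrite -[leLHS]mul1r ler_pdivrMr; last by lra.
by rewrite (_ : _ * _ = 1 + x ^+ 3) ?lerDl ?exprn_ge0 //; ring.
Qed.

Lemma cvg_one_sub_expRN_div (s : R) (h : R ^nat) : 0 <= s ->
  (forall n, 0 < h n) -> h @ \oo --> 0 ->
  (fun n => (1 - expR (- (h n * s))) / h n) @ \oo --> s.
Proof.
move=> s0 h0 cvh; apply: (@squeeze_cvgr _ _ _ _ (fun n => s - s ^+ 2 * h n) (fun=> s)).
- near=> n; have /andP[lb ub] := expRN_bounds (mulr_ge0 (ltW (h0 n)) s0).
  rewrite ler_pdivlMr // ler_pdivrMr // [s * _]mulrC ub andbT.
  by have -> : (s - s ^+ 2 * h n) * h n = h n * s - (h n * s) ^+ 2 by ring.
- by rewrite -[X in _ --> X]subr0 -(mulr0 (s ^+ 2)); apply: cvgB; [exact: cvg_cst|apply: cvgMr].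
- exact: cvg_cst.
Unshelve. all: by end_near.
Qed.

End ExpBounds.

Section DistanceKernels.
Variables (R : realType) (D : nat) (I : finType).
Implicit Types (x y : 'rV[R]_D) (p : I -> 'rV[R]_D).

Definition sqdist x y := \sum_(k < D) (x ord0 k - y ord0 k) ^+ 2.

Lemma sqdist_ge0 x y : 0 <= sqdist x y.
Proof. by apply: sumr_ge0 => k _; apply: sqr_ge0. Qed.

Lemma sqdistC x y : sqdist x y = sqdist y x.
Proof. by apply: eq_bigr => k _; rewrite -sqrrN opprB. Qed.

Lemma edistC x y : Defs.edist x y = Defs.edist y x.
Proof. by rewrite /Defs.edist -/(sqdist x y) sqdistC. Qed.

Lemma sqdist_shift (k0 : 'I_D) x y (s : R) :
  sqdist (x + s *: \row_k (k == k0)%:R) y =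
  sqdist x y + 2 * (x ord0 k0 - y ord0 k0) * s + s ^+ 2.
Proof.
rewrite /sqdist (eq_bigr (fun k => (x ord0 k - y ord0 k) ^+ 2 +
  ((k == k0)%:R * (2 * (x ord0 k - y ord0 k) * s) + (k == k0)%:R * s ^+ 2))).
  by rewrite !big_split /= !sum_delta addrA.
by move=> k _; rewrite !mxE; case: (k == k0) => /=; ring.
Qed.

Lemma sqdist_gt0 x y : x != y -> 0 < sqdist x y.
Proof.
move=> xy; rewrite lt_neqAle sqdist_ge0 andbT eq_sym; apply: contra xy => /eqP d0.
apply/eqP/rowP => k; apply/eqP; rewrite -subr_eq0 -sqrf_eq0.
by rewrite (psumr_eq0P (fun k _ => sqr_ge0 (x ord0 k - y ord0 k)) d0).
Qed.

Lemma psd_gauss p (e : R) : 0 <= e ->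
  psd (fun i j => expR (- (e * sqdist (p i) (p j)))).
Proof.
move=> e0; pose a i := \sum_(k < D) p i ord0 k ^+ 2.
pose M i j := 2 * e * \sum_(k < D) p i ord0 k * p j ord0 k.
have sM : sym M by move=> i j; rewrite /M; congr (_ * _); apply: eq_bigr => k _; rewrite mulrC.
have hM : psd M by apply: psdZ (psd_gram (fun i k => p i ord0 k)); rewrite mulr_ge0.
apply: (eq_psd _ (psd_rescale (fun i => expR (- (e * a i))) (psd_expR sM hM))) => i j.
rewrite -!expRD /M /a /sqdist; congr expR.
have -> : \sum_(k < D) (p i ord0 k - p j ord0 k) ^+ 2 =
    a i + a j - 2 * \sum_(k < D) p i ord0 k * p j ord0 k.
  by rewrite mulr_sumr -!big_split -sumrN -big_split /=; apply: eq_bigr => k _; ring.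
by rewrite /a; ring.
Qed.

Definition laplace_kernel (t : R) x y := expR (- (t * Defs.edist x y)).

Lemma laplace_kernelC t x y : laplace_kernel t x y = laplace_kernel t y x.
Proof. by rewrite /laplace_kernel edistC. Qed.

Lemma laplace_kernel_refl (t : R) x : laplace_kernel t x x = 1.
Proof.
rewrite /laplace_kernel /Defs.edist big1 ?sqrtr0 ?mulr0 ?oppr0 ?expR0 // => k _.
by rewrite subrr expr0n.
Qed.

(* With G = exp (- |x - y| ^ 2 / r ^ 2), r ^ 2 (1 - G) tends to |x - y| ^ 2 as r
   grows, and exp (- t r sqrt (1 - G)) = exp (- t r) exp (t r (1 - sqrt (1 - G))). *)
Lemma psd_laplace_kernel p (t : R) : 0 <= t ->
  psd (fun i j => laplace_kernel t (p i) (p j)).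
Proof.
move=> t0; pose r n : R := n.+1%:R; pose h n := (r n ^+ 2)^-1.
pose G n i j := expR (- (h n * sqdist (p i) (p j))).
have r0 n : 0 < r n by rewrite ltr0n.
have h0 n : 0 < h n by rewrite invr_gt0 exprn_gt0.
have G01 n i j : 0 <= G n i j <= 1.
  by rewrite expR_ge0 expR_le1 oppr_le0 mulr_ge0 ?sqdist_ge0 ?(ltW (h0 n)).
apply: (psd_lim (Ms := fun n i j =>
  expR (- (t * r n)) * expR (t * r n * (1 - Num.sqrt (1 - G n i j))))) => [n|i j].
  apply: psdZ (expR_ge0 _) (psd_expR _ (psdZ _ (psd_one_sub_sqrt _ _ (G01 n)))).
  - by move=> i j; rewrite /G sqdistC.
  - by rewrite mulr_ge0 // ltW.
  - by move=> i j; rewrite /G sqdistC.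
  - exact/psd_gauss/ltW.
have E n : expR (- (t * r n)) * expR (t * r n * (1 - Num.sqrt (1 - G n i j))) =
    expR (- (t * Num.sqrt ((1 - G n i j) / h n))).
  have [_ G1] := andP (G01 n i j).
  rewrite -expRD /h invrK sqrtrM ?subr_ge0 // sqrtr_sqr ger0_norm ?(ltW (r0 n)) //.
  by congr expR; rewrite /r /G; ring.
rewrite (eq_fun E); apply: continuous_cvg; first exact: continuous_expR.
apply: cvgN; apply: cvgMl_tmp; apply: continuous_cvg; first exact: sqrt_continuous.
apply: (cvg_one_sub_expRN_div (sqdist_ge0 _ _) h0).
have -> : h = fun n => harmonic n * harmonic n by apply/funext => n; rewrite /h -exprVn expr2.
by rewrite -(mulr0 0); apply: cvgM; apply: cvg_harmonic.
Qed.

End DistanceKernels.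

(** * Strict positive definiteness *)

Section Derivability.
Variable R : realType.

Lemma derivable1_comp (f g : R -> R) x :
  derivable g x 1 -> derivable f (g x) 1 -> derivable (f \o g) x 1.
Proof.
by move=> /derivable1_diffP dg /derivable1_diffP df; apply/derivable1_diffP/differentiable_comp.
Qed.

Lemma derivable_big (J : Type) (r : seq J) (P : pred J) (f : J -> R -> R) x :
  (forall j, P j -> derivable (f j) x 1) ->
  derivable (fun s => \sum_(j <- r | P j) f j s) x 1.
Proof.
move=> df; rewrite -fct_sumE.
apply: (big_ind (fun g : R -> R => derivable g x 1)) => [|g h|j /df //].
  exact: derivable_cst.
exact: derivableD.
Qed.

Lemma derivable_expR_sqrt_quadratic (A a t : R) : 0 < A ->
  derivable (fun s => expR (- (t * Num.sqrt (A + 2 * a * s + s ^+ 2)))) 0 1.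
Proof.
move=> A0; pose P s := A + 2 * a * s + s ^+ 2.
have dP : derivable P 0 1.
  have dlin := @derivableM R R^o (cst (2 * a)) id 0 1
    (derivable_cst _ _ _) (@derivable_id R R^o _ 1).
  have daff := @derivableD R R^o R^o (cst A) _ 0 1 (derivable_cst _ _ _) dlin.
  exact: (@derivableD R R^o R^o _ (id ^+ 2) 0 1 daff
    (@derivableX R R^o id 2 0 1 (@derivable_id R R^o 0 1))).
have dsqrt : derivable Num.sqrt (P 0) 1.
  by apply: ex_derive; apply: is_derive1_sqrt; rewrite /P mulr0 addr0 expr0n addr0.
have dlin : derivable (fun y : R => - (t * y)) (Num.sqrt (P 0)) 1.
  exact: (@derivableN R R^o R^o (cst t * id) _ 1
    (@derivableM R R^o (cst t) id _ 1 (derivable_cst _ _ _) (@derivable_id R R^o _ 1))).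
have dsqrtP := derivable1_comp dP dsqrt.
have dexpo := derivable1_comp (f := fun y => - (t * y)) dsqrtP dlin.
have dexp : derivable expR (((fun y => - (t * y)) \o (Num.sqrt \o P)) 0) 1.
  exact: derivable_expR.
exact: (derivable1_comp dexpo dexp).
Qed.

Lemma expR_abs_nonsmooth (t c : R) (phi : R -> R) : 0 < t -> derivable phi 0 1 ->
  (forall s, c * expR (- (t * `|s|)) + phi s = 0) -> c = 0.
Proof.
move=> t0 dphi E.
have phiE s : phi s = - (c * expR (- (t * `|s|)))
  by apply/eqP; rewrite -addr_eq0 addrC E.
pose F h := h^-1 *: (phi (h *: 1 + 0) - phi 0).
have /cvgr_dnbhsP dF : F x @[x --> 0^'] --> 'D_1 phi 0 by apply: cvg_toP dphi _.
have FE h : F h = c * ((1 - expR (- (`|h| * t))) / h).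
  rewrite /F addr0 [_%:A]mulr1 !phiE normr0 mulr0 oppr0 expR0 mulr1 (mulrC t `|h|).
  by rewrite [_ *: _]mulrC; ring.
have hn0 n : harmonic n != 0 :> R by rewrite gt_eqF // harmonic_gt0.
have cv_quot : (fun n => (1 - expR (- (harmonic n * t))) / harmonic n) @ \oo --> t.
  exact: (@cvg_one_sub_expRN_div _ t harmonic (ltW t0) harmonic_gt0 cvg_harmonic).
have right_der : c * t = 'D_1 phi 0.
  rewrite -(cvg_lim _ (dF _ (conj hn0 cvg_harmonic))) //.
  under eq_fun do rewrite FE ger0_norm ?harmonic_ge0 //.
  by apply/esym/cvg_lim => //; apply: cvgMl_tmp cv_quot.
have left_der : - (c * t) = 'D_1 phi 0.
  have hNn0 n : - harmonic n != 0 :> R by rewrite oppr_eq0.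
  have cvN : - harmonic n @[n --> \oo] --> (0 : R).
    by rewrite -oppr0; apply: cvgN; apply: cvg_harmonic.
  rewrite -(cvg_lim _ (dF _ (conj hNn0 cvN))) //.
  under eq_fun do rewrite FE normrN ger0_norm ?harmonic_ge0 // invrN mulrN mulrN.
  by apply/esym/cvg_lim => //; apply: cvgN; apply: cvgMl_tmp cv_quot.
have : c * t = 0 by lra.
by move/eqP; rewrite mulf_eq0 (gt_eqF t0) orbF => /eqP.
Qed.

End Derivability.

Section StrictPositivity.
Variables (R : realType) (D : nat) (I : finType).
Implicit Types (x y : 'rV[R]_D) (p : I -> 'rV[R]_D).

Lemma sum_option (F : option I -> R) : \sum_o F o = F None + \sum_i F (Some i).
Proof.
rewrite (bigD1 None) //=; congr (_ + _).
rewrite (@reindex_omap _ _ _ _ _ Some id) /=; last by case.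
by apply: eq_bigl => i; rewrite eqxx.
Qed.

Lemma laplace_combination_eq0 p (t : R) c : 0 <= t ->
  qform (fun i j => laplace_kernel t (p i) (p j)) c = 0 ->
  forall y, \sum_i c i * laplace_kernel t y (p i) = 0.
Proof.
move=> t0 qc0 y.
(* y is adjoined as an extra point, indexed by None, with coefficient 0. *)
pose q o := if o is Some i then p i else y.
pose c' o := if o is Some i then c i else 0.
have sK : sym (fun o o' => laplace_kernel t (q o) (q o')).
  by move=> o o'; apply: laplace_kernelC.
have := psd_qform_eq0 (c := c') None sK (psd_laplace_kernel q t0).
rewrite sum_option mul0r add0r; under eq_bigr do rewrite laplace_kernelC; apply.
rewrite /qform sum_option big1 ?add0r => [|o _]; last by rewrite /= !mul0r.
rewrite -[RHS]qc0; apply: eq_bigr => i _.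
by rewrite sum_option /= mulr0 mul0r add0r.
Qed.

Lemma derivable_laplace_kernel_shift (k0 : 'I_D) (t : R) x y : x != y ->
  derivable (fun s : R => laplace_kernel t (x + s *: \row_k (k == k0)%:R) y) 0 1.
Proof.
move=> xy; have -> : (fun s : R => laplace_kernel t (x + s *: \row_k (k == k0)%:R) y) =
    fun s => expR (- (t * Num.sqrt (sqdist x y + 2 * (x ord0 k0 - y ord0 k0) * s + s ^+ 2))).
  by apply/funext => s; rewrite /laplace_kernel /Defs.edist -/(sqdist _ _) sqdist_shift.
exact: derivable_expR_sqrt_quadratic (sqdist_gt0 xy).
Qed.

(* Along the line through p i0 in a coordinate direction, the combination of
   [laplace_combination_eq0] is c i0 exp (- t |s|) plus a function that is
   differentiable at s = 0.  For D = 0 there is a single point. *)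
Lemma laplace_kernel_strict p (t : R) c : 0 < t -> injective p ->
  qform (fun i j => laplace_kernel t (p i) (p j)) c = 0 -> forall i, c i = 0.
Proof.
move=> t0 p_inj qc0 i0; have comb0 := laplace_combination_eq0 (ltW t0) qc0.
have [D0|D_gt0] := posnP D.
  have := comb0 (p i0); rewrite (bigD1 i0) //= laplace_kernel_refl mulr1 big1 ?addr0 // => j ji.
  suff /p_inj/eqP : p j = p i0 by rewrite (negbTE ji).
  by apply/rowP => -[k hk]; exfalso; rewrite D0 in hk.
pose e : 'rV[R]_D := \row_k (k == Ordinal D_gt0)%:R.
pose phi (s : R) := \sum_(j | j != i0) c j * laplace_kernel t (p i0 + s *: e) (p j).
apply: (@expR_abs_nonsmooth R t (c i0) phi) => // [|s].
  apply: derivable_big => j ji; apply: derivableZ.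
  by apply: derivable_laplace_kernel_shift; apply: contra ji => /eqP/p_inj ->.
rewrite -[RHS](comb0 (p i0 + s *: e)) [RHS](bigD1 i0) //=; congr (_ * _ + _).
rewrite /laplace_kernel /Defs.edist -/(sqdist _ _) sqdist_shift subrr mulr0 mul0r addr0.
by rewrite /sqdist big1 ?add0r ?sqrtr_sqr // => k _; rewrite subrr expr0n.
Qed.

End StrictPositivity.

Local Open Scope fset_scope.

Section Weights.
Variables (R : realType) (D : nat) (t : R).
Hypothesis t_gt0 : 0 < t.
Implicit Types (A S X Y : {fset 'rV[R]_D}) (x y : 'rV[R]_D).

Lemma ptA_inj A : injective (fun i : 'I_(size (enum_fset A)) => ptA A i).
Proof. by move=> i j /eqP; rewrite /ptA nth_uniq ?fset_uniq // => /eqP/val_inj. Qed.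

Lemma ptA_index A x : x \in A -> ptA A (index x (enum_fset A)) = x.
Proof. by move=> xA; rewrite /ptA nth_index. Qed.

Lemma sum_ptA A (F : 'rV[R]_D -> R) :
  \sum_(i < size (enum_fset A)) F (ptA A i) = \sum_(y <- enum_fset A) F y.
Proof. by rewrite (big_nth 0) big_mkord. Qed.

Lemma laplace_kernel_fset_free S (d : 'rV[R]_D -> R) :
  (forall x, x \in S -> \sum_(y <- enum_fset S) laplace_kernel t x y * d y = 0) ->
  forall x, x \in S -> d x = 0.
Proof.
move=> dS0 x xS; rewrite -(ptA_index xS).
have ix : (index x (enum_fset S) < size (enum_fset S))%N by rewrite index_mem.
apply: (laplace_kernel_strict (c := fun i : 'I_(size (enum_fset S)) => d (ptA S i))
  t_gt0 (@ptA_inj S) _ (Ordinal ix)).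
rewrite /qform big1 // => i _.
transitivity (d (ptA S i) * \sum_(y <- enum_fset S) laplace_kernel t (ptA S i) y * d y).
  rewrite -(sum_ptA S (fun y => laplace_kernel t (ptA S i) y * d y)) mulr_sumr.
  by apply: eq_bigr => j _; ring.
by rewrite dS0 ?mulr0 // mem_nth.
Qed.

Lemma zeta_unit A : zeta t A \in unitmx.
Proof.
rewrite unitmxE unitfE; apply/negP => /det0P[v /negP v0 vZ]; apply: v0.
apply/eqP/rowP => i; rewrite mxE.
apply: (laplace_kernel_strict (c := v 0) t_gt0 (@ptA_inj A)).
rewrite /qform big1 // => j _.
transitivity (v 0 j * (v *m zeta t A) 0 j); last by rewrite vZ mxE mulr0.
by rewrite mxE mulr_sumr; apply: eq_bigr => k _; rewrite mxE laplace_kernelC mulrA.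
Qed.

Lemma weight_ptA A (i : 'I_(size (enum_fset A))) :
  weight t A (ptA A i) = weightvec t A i ord0.
Proof.
by rewrite /weight (bigD1 i) //= big1 ?addr0 // => j /andP[/eqP/(@ptA_inj A) -> /eqP].
Qed.

Lemma sum_weight A x : x \in A ->
  \sum_(y <- enum_fset A) laplace_kernel t x y * weight t A y = 1.
Proof.
move=> xA; have ix : (index x (enum_fset A) < size (enum_fset A))%N by rewrite index_mem.
have := congr1 (fun M : 'cV_(size (enum_fset A)) => M (Ordinal ix) ord0)
  (mulKVmx (zeta_unit A) (const_mx 1)).
rewrite /= !mxE => <-; rewrite -sum_ptA; apply: eq_bigr => j _.
by rewrite weight_ptA [zeta t A _ _]mxE -{1}(ptA_index xA).
Qed.

Lemma in_wsupport A x : (x \in wsupport t A) = (x \in A) && (weight t A x != 0).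
Proof. by rewrite !inE. Qed.

Lemma wsupport_sub A : {subset wsupport t A <= A}.
Proof. by move=> x; rewrite in_wsupport => /andP[]. Qed.

Lemma weight_notin_wsupport A x : x \in A -> x \notin wsupport t A -> weight t A x = 0.
Proof. by move=> xA; rewrite in_wsupport xA negbK => /eqP. Qed.

Lemma sum_wsupport_weight A x : x \in A ->
  \sum_(y <- enum_fset (wsupport t A)) laplace_kernel t x y * weight t A y = 1.
Proof.
move=> xA; rewrite -(sum_weight xA); apply: big_fset_incl => [|y yA yS].
  exact/fsubsetP/wsupport_sub.
by rewrite weight_notin_wsupport // mulr0.
Qed.

Lemma eq_wsupport_weight X Y : wsupport t X = wsupport t Y ->
  {in wsupport t X, weight t X =1 weight t Y}.
Proof.
move=> eqS z zS; apply/eqP; rewrite -subr_eq0; apply/eqP; move: z zS.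
apply: (laplace_kernel_fset_free (d := fun z => weight t X z - weight t Y z)) => x xS.
rewrite (eq_bigr (fun y => laplace_kernel t x y * weight t X y -
  laplace_kernel t x y * weight t Y y)); last by move=> y _; rewrite mulrBr.
have xX : x \in X := wsupport_sub xS.
have xY : x \in Y by apply: wsupport_sub; rewrite -eqS.
by rewrite sumrB sum_wsupport_weight // eqS sum_wsupport_weight // subrr.
Qed.

End Weights.

Theorem lemmaB3 (R : realType) (D : nat) (t : R) (X Y : {fset 'rV[R]_D}) :
  0 < t ->
  (magnitude_equivalent t X Y <->
   [/\ (forall z, z \in X `&` Y -> weight t X z = weight t Y z),
       (forall z, z \in X `\` (X `&` Y) -> weight t X z = 0)
     & (forall z, z \in Y `\` (X `&` Y) -> weight t Y z = 0)]).
Proof.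
move=> t0; split=> [eqS|[wXY wX wY]]; last first.
  apply/fsetP => x; rewrite !in_wsupport.
  case xX: (x \in X); case xY: (x \in Y) => //=.
  - by rewrite wXY // in_fsetI xX xY.
  - by rewrite wX ?eqxx // in_fsetD in_fsetI xX xY.
  - by rewrite wY ?eqxx // in_fsetD in_fsetI xX xY.
split=> z.
- rewrite in_fsetI => /andP[zX zY].
  have [/(eq_wsupport_weight t0 eqS) //|zNS] := boolP (z \in wsupport t X).
  by rewrite !weight_notin_wsupport // -eqS.
- rewrite in_fsetD in_fsetI => /andP[/[swap] zX]; rewrite zX /= => zNY.
  by apply: weight_notin_wsupport zX _; rewrite eqS; apply: contra zNY; apply: wsupport_sub.
- rewrite in_fsetD in_fsetI => /andP[/[swap] zY]; rewrite zY andbT => zNX.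
  by apply: weight_notin_wsupport zY _; rewrite -eqS; apply: contra zNX; apply: wsupport_sub.
Qed.
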